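(* Let $D$ be an Egyptian domain with fraction field $K$, and let $x$ be an indeterminate. For a subring $A$ of $K(x)$ with fraction field $K(x)$, let $R(A)$ denote the subring of $K(x)$ generated by $\{1/a \mid a \in A\setminus\{0\}\}$. Then $R(D[x]) = R(K[x])$. Consequently, $D[x]$ is Bonaccian.
   Context: For an integral domain $A$ with fraction field $L$, an element of $L$ is $A$-Egyptian if it is a sum of reciprocals of distinct nonzero elements of $A$. $A$ is Egyptian if every nonzero element of $L$ is $A$-Egyptian, and $A$ is Bonaccian if for every nonzero $\alpha\in L$, either $\alpha$ or $\alpha^{-1}$ is $A$-Egyptian. *)

From HB Require Import structures.
From mathcomp Require Import all_boot all_algebra.
Set Implicit Arguments. Unset Strict Implicit. Unset Printing Implicit Defensive.
Import GRing.Theory.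
Local Open Scope ring_scope.

Definition tofrac (A : idomainType) : A -> {fraction A} := @FracField.tofrac A.

Definition egyptian_elt (A : idomainType) (alpha : {fraction A}) : Prop :=
  exists s : seq A, [/\ uniq s, all (fun a => a != 0) s &
                        alpha = \sum_(a <- s) (tofrac a)^-1].

Definition Egyptian (A : idomainType) : Prop :=
  forall alpha : {fraction A}, alpha != 0 -> egyptian_elt alpha.

Definition Bonaccian (A : idomainType) : Prop :=
  forall alpha : {fraction A}, alpha != 0 ->
    egyptian_elt alpha \/ egyptian_elt alpha^-1.

Definition gen_subring (L : nzRingType) (S : L -> Prop) (z : L) : Prop :=
  forall P : L -> Prop,
    P 1 -> (forall u v, P u -> P v -> P (u - v)) ->
    (forall u v, P u -> P v -> P (u * v)) ->
    (forall y, S y -> P y) -> P z.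

Definition Rrecip (L : fieldType) (A : L -> Prop) : L -> Prop :=
  gen_subring (fun y => exists2 a, A a & (a != 0) /\ y = a^-1).

(* K(x) = {fraction {poly {fraction D}}}, with its subrings K[x] and D[x]. *)
Definition Kx (D : idomainType) := {fraction {poly {fraction D}}}.

Definition polyK_in (D : idomainType) (y : Kx D) : Prop :=
  exists p : {poly {fraction D}}, y = tofrac p.

Definition polyD_in (D : idomainType) (y : Kx D) : Prop :=
  exists p : {poly D}, y = tofrac (map_poly (@tofrac D) p).

(* Part 1: clearing denominators, every [p] in [K[x]] satisfies [d p = g] with [d] a nonzero element
   of [D] and [g] in [D[x]], so [1/p = d * (1/g)]; and [d], a sum of reciprocals of elements of [D],
   lies in [R(D[x])].
   Part 2: if [size p <= size q], pseudo-divide [c q = s p + r]; then [p/q = c/s + r/(-(q s))].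
   Expanding [c] in [D] turns [c/s] into reciprocals of constant multiples of [s], and by induction
   on [size p] the term [r/(-(q s))] expands into reciprocals of polynomials of size larger than
   [size s], so all denominators are distinct.  Either [alpha] or [alpha^-1] is such a quotient. *)

From HB Require Import structures.
From mathcomp Require Import all_boot all_algebra.
From mathcomp Require Import ring zify.
Set Implicit Arguments.
Unset Strict Implicit.
Unset Printing Implicit Defensive.
Import GRing.Theory.
Local Open Scope ring_scope.

Local Notation "x %:F" := (@FracField.tofrac _ x).

Lemma tofrac_inj (R : idomainType) : injective (@FracField.tofrac R).
Proof. by move=> x y /eqP; rewrite tofrac_eq => /eqP. Qed.

Lemma frac_numden (R : idomainType) (x : {fraction R}) :
  exists a b : R, b != 0 /\ x = a%:F / b%:F.
Proof.
elim/quotP: x => r _; have b0 : (r : R * R).2 != 0 by case: r.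
exists (r : R * R).1, (r : R * R).2; split => //.
apply: (canRL (mulfK _)); first by rewrite tofrac_eq0.
rewrite /FracField.tofrac; unlock.
rewrite -[_ * _]/(FracField.mul _ _) -FracField.pi_mul /FracField.mulf /=.
apply/eqP; rewrite FracField.equivf_def /= !numden_Ratio ?mulf_neq0 ?oner_eq0 //=.
by rewrite !mulr1 mulrC.
Qed.

Lemma clear_denominators (R : idomainType) (p : {poly {fraction R}}) :
  exists (d : R) (g : {poly R}), d != 0 /\ d%:F *: p = map_poly (@FracField.tofrac R) g.
Proof.
elim/poly_ind: p => [|p c [d [g [d0 IH]]]].
  by exists 1, 0; rewrite oner_eq0 scaler0 rmorph0.
have [a [b [b0 ->]]] := frac_numden c.
have cE : (d * b)%:F * (a%:F / b%:F) = (d * a)%:F.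
  by rewrite !tofracM -mulrA [b%:F * _]mulrC divfK // tofrac_eq0.
exists (d * b), (b%:P * g * 'X + (d * a)%:P); split; first by rewrite mulf_neq0.
rewrite scalerDr scale_polyC cE scalerAl.
have -> : (d * b)%:F *: p = b%:F *: map_poly (@FracField.tofrac R) g.
  by rewrite -IH scalerA -tofracM mulrC.
by rewrite -mul_polyC rmorphD !rmorphM /= !map_polyC map_polyX.
Qed.

Lemma rmorph_sum_inv (R : idomainType) (L : fieldType) (f : {rmorphism R -> L})
    (E : seq R) (d : R) :
  injective f -> all (fun e => e != 0) E ->
  d%:F = \sum_(e <- E) (e%:F)^-1 -> f d = \sum_(e <- E) (f e)^-1.
Proof.
(* Induct on [E] for a quotient [a/b]: removing [1/e] from [a/b] leaves [(a e - b)/(b e)]. *)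
move=> finj; rewrite -[d%:F]divr1 -tofrac1 -[f d]divr1 -(rmorph1 f).
elim: E d 1 (oner_neq0 R) => [|e E IH] a b b0 /=.
  rewrite !big_nil => _ /eqP; rewrite mulf_eq0 invr_eq0 !tofrac_eq0 (negbTE b0) orbF.
  by move/eqP->; rewrite rmorph0 mul0r.
have peel (K : fieldType) (x y z : K) :
    y != 0 -> z != 0 -> (x * z - y) / (y * z) = x / y - z^-1.
  by move=> y0 z0; field; rewrite y0 z0.
case/andP=> e0 nzE; rewrite !big_cons => sumE.
have fb0 : f b != 0 by rewrite raddf_eq0.
have fe0 : f e != 0 by rewrite raddf_eq0.
have /IH : (a * e - b)%:F / (b * e)%:F = \sum_(e <- E) (e%:F)^-1.
  by rewrite tofracB !tofracM peel ?tofrac_eq0 // sumE addrC addKr.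
rewrite mulf_neq0 // rmorphB !rmorphM peel // => /(_ isT nzE) <-.
by rewrite addrC subrK.
Qed.

Section GeneratedSubring.

Variables (L : nzRingType) (S : L -> Prop).

Lemma gen_subring_mem y : S y -> gen_subring S y.
Proof. by move=> Sy P _ _ _; apply. Qed.

Lemma gen_subringB u v : gen_subring S u -> gen_subring S v -> gen_subring S (u - v).
Proof. move=> Su Sv P P1 PB PM PS; exact: PB (Su P P1 PB PM PS) (Sv P P1 PB PM PS). Qed.

Lemma gen_subringM u v : gen_subring S u -> gen_subring S v -> gen_subring S (u * v).
Proof. move=> Su Sv P P1 PB PM PS; exact: PM (Su P P1 PB PM PS) (Sv P P1 PB PM PS). Qed.

Lemma gen_subring0 : gen_subring S 0.
Proof. by rewrite -(subrr 1); apply: gen_subringB => P P1. Qed.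

Lemma gen_subringN u : gen_subring S u -> gen_subring S (- u).
Proof. by move=> Su; rewrite -sub0r; apply: gen_subringB => //; apply: gen_subring0. Qed.

Lemma gen_subringD u v : gen_subring S u -> gen_subring S v -> gen_subring S (u + v).
Proof. by move=> Su Sv; rewrite -[v]opprK; apply: gen_subringB => //; apply: gen_subringN. Qed.

Lemma gen_subring_min (S' : L -> Prop) z :
  (forall y, S y -> gen_subring S' y) -> gen_subring S z -> gen_subring S' z.
Proof.
move=> SS' Sz P P1 PB PM PS'.
exact: Sz P P1 PB PM (fun y Sy => SS' y Sy P P1 PB PM PS').
Qed.

End GeneratedSubring.

Lemma Rrecip_inv (L : fieldType) (A : L -> Prop) a : A a -> Rrecip A a^-1.
Proof.
have [-> _ | a0 Aa] := eqVneq a 0; first by rewrite invr0; apply: gen_subring0.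
by apply: gen_subring_mem; exists a.
Qed.

Lemma divf_pseudo_division (K : fieldType) (c p q s r : K) :
  q != 0 -> s != 0 -> c * q = s * p + r -> p / q = c / s + r / - (q * s).
Proof.
move=> q0 s0 divE; have -> : r = c * q - s * p by rewrite divE addrC addKr.
by field; rewrite oppr_eq0 mulf_neq0 ?s0 ?q0.
Qed.

Section EgyptianDomain.

Variables (D : idomainType) (D_egyptian : Egyptian D).

Lemma egyptian_rmorph (L : fieldType) (f : {rmorphism D -> L}) (d : D) :
  injective f -> d != 0 ->
  exists E : seq D, [/\ uniq E, all (fun e => e != 0) E & f d = \sum_(e <- E) (f e)^-1].
Proof.
move=> finj d0; have /D_egyptian[E [uE nzE dE]] : d%:F != 0 by rewrite tofrac_eq0.
by exists E; split; rewrite // (rmorph_sum_inv finj nzE dE).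
Qed.

Lemma Rrecip_polyD_inv (p : {poly {fraction D}}) : Rrecip (@polyD_in D) (p%:F)^-1.
Proof.
have [d [g [d0 dpE]]] := clear_denominators p.
pose f := @FracField.tofrac _ \o polyC \o @FracField.tofrac D : {rmorphism D -> Kx D}.
have finj : injective f := inj_comp (inj_comp (@tofrac_inj _) (@polyC_inj _)) (@tofrac_inj D).
have polyD_f e : polyD_in (f e) by exists e%:P; rewrite map_polyC.
have fd0 : f d != 0 by rewrite raddf_eq0.
have -> : (p%:F)^-1 = f d * ((map_poly (@FracField.tofrac D) g)%:F)^-1.
  by rewrite -dpE -mul_polyC tofracM invfM -/(f d) mulVKf.
have [E [_ _ ->]] := egyptian_rmorph finj d0.
apply: gen_subringM; last by apply: Rrecip_inv; exists g.
apply: big_ind => [||e _]; first exact: gen_subring0.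
  exact: gen_subringD.
exact: Rrecip_inv (polyD_f e).
Qed.

Lemma Rrecip_polyD_polyK (z : Kx D) : Rrecip (@polyD_in D) z <-> Rrecip (@polyK_in D) z.
Proof.
split; apply: gen_subring_min => _ [_ [p ->] [_ ->]].
  by apply: Rrecip_inv; exists (map_poly (@FracField.tofrac D) p).
exact: Rrecip_polyD_inv.
Qed.

Lemma egyptian_polyC_div (c : D) (s : {poly D}) : c != 0 -> s != 0 ->
  exists t : seq {poly D},
    [/\ uniq t, all (fun f : {poly D} => (f != 0) && (size f == size s)) t &
    (c%:P)%:F / s%:F = \sum_(f <- t) (f%:F)^-1].
Proof.
move=> c0 s0; pose f := @FracField.tofrac _ \o @polyC D : {rmorphism D -> {fraction {poly D}}}.
have [E [uE nzE cE]] := egyptian_rmorph (inj_comp (@tofrac_inj _) (@polyC_inj _)) c0.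
exists [seq e%:P * s | e <- E]; split.
- by rewrite map_inj_uniq // => x y /(mulIf s0) /polyC_inj.
- apply/allP => _ /mapP[e /(allP nzE) e0 ->].
  by rewrite mulf_neq0 ?polyC_eq0 //= size_Cmul.
rewrite big_map -[(c%:P)%:F]/(f c) cE mulr_suml.
by apply: eq_bigr => e _; rewrite tofracM invfM.
Qed.

Lemma egyptian_poly_frac (p q : {poly D}) : q != 0 -> (size p <= size q)%N ->
  exists s : seq {poly D}, [/\ uniq s, all (fun f => f != 0) s,
    all (fun f : {poly D} => (size q < size f + size p)%N) s &
    p%:F / q%:F = \sum_(f <- s) (f%:F)^-1].
Proof.
have [n] := ubnP (size p); elim: n p q => // n IH p q lt_pn q0 le_pq.
have [-> | p0] := eqVneq p 0; first by exists [::]; rewrite big_nil tofrac0 mul0r.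
set c := lead_coef p ^+ scalp q p.
set s0 : {poly D} := q %/ p; set r : {poly D} := q %% p.
have divE : c *: q = s0 * p + r := Pdiv.Idomain.divp_eq q p.
have c0 : c != 0 by rewrite expf_neq0 // lead_coef_eq0.
have lt_rp : (size r < size p)%N := Pdiv.Idomain.ltn_modpN0 q p0.
have s00 : s0 != 0 by rewrite Pdiv.Idomain.divpN0.
have size_s0 : size s0 = (size q - (size p).-1)%N := Pdiv.Idomain.size_divp q p0.
have p_gt0 : (0 < size p)%N by rewrite size_poly_gt0.
have q'0 : - (q * s0) != 0 by rewrite oppr_eq0 mulf_neq0.
have size_q' : size (- (q * s0)) = (size q + size s0).-1 by rewrite size_polyN size_mul.
have [|s' [us' nzs' size_s' rE]] := IH r _ (leq_trans lt_rp lt_pn) q'0.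
  by rewrite size_q'; lia.
have [t [ut sizes_t cE]] := egyptian_polyC_div c0 s00.
have {}size_s' :
    all (fun f : {poly D} => (size s0 < size f) && (size q < size f + size p))%N s'.
  by apply: sub_all size_s' => f; rewrite size_q'; lia.
exists (t ++ s'); split.
- rewrite cat_uniq ut us' andbT /=; apply/hasPn => g /(allP size_s') /andP[lt_s0g _].
  by apply/negP => /(allP sizes_t) /andP[_ /eqP eq_gs0]; rewrite eq_gs0 ltnn in lt_s0g.
- by rewrite all_cat nzs' andbT; apply: sub_all sizes_t => f /andP[].
- rewrite all_cat; apply/andP; split; last by apply: sub_all size_s' => f /andP[].
  by apply: sub_all sizes_t => f /andP[_ /eqP->]; lia.
rewrite big_cat /= -cE -rE tofracN tofracM.
apply: divf_pseudo_division; rewrite ?tofrac_eq0 //.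
by rewrite -!tofracM -tofracD -divE mul_polyC.
Qed.

Lemma poly_bonaccian : Bonaccian {poly D}.
Proof.
move=> alpha alpha0; have [p [q [q0 alphaE]]] := frac_numden alpha.
have p0 : p != 0 by apply: contraNneq alpha0; rewrite alphaE => ->; rewrite tofrac0 mul0r.
have egyptian_pq (a b : {poly D}) :
    b != 0 -> (size a <= size b)%N -> egyptian_elt (a%:F / b%:F).
  by move=> b0 /(egyptian_poly_frac b0)[s [? ? _ ?]]; exists s.
rewrite alphaE; have [le_pq | /ltnW le_qp] := leqP (size p) (size q).
  by left; apply: egyptian_pq.
by right; rewrite invf_div; apply: egyptian_pq.
Qed.

End EgyptianDomain.

Theorem proposition2p15 (D : idomainType) :
  Egyptian D ->
  (forall z : Kx D, Rrecip (@polyD_in D) z <-> Rrecip (@polyK_in D) z)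
  /\ Bonaccian {poly D}.
Proof. by move=> D_egyptian; split; [apply: Rrecip_polyD_polyK | apply: poly_bonaccian]. Qed.
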